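(* Let $f:\mathbb{N}^k\to\mathbb{N}$ be a function in the class $\mathcal{G}$. Then for all but finitely many positive integers $s$ there exists a $\lambda$-term $E$ such that (1) for all $n_1,\dots,n_k\in\mathbb{N}$, $E\,\rho(n_1)\cdots\rho(n_k)=_{\beta\eta}\rho(f(n_1,\dots,n_k))$, and (2) $\vdash E:\omega_{\tau(s)}\to\cdots\to\omega_{\tau(s)}\to\omega_{\tau(s)}$ (with $k$ arguments), where $\tau(s)=(\alpha^{s}\to\alpha)\to\alpha$ with $\alpha=\omega_o$, i.e. $\tau(s)$ is the type of an $s$-tuple of numerals.
   Context: We work in the simply typed $\lambda$-calculus (type assignment to untyped $\lambda$-terms) with a single base type $o$. For a type $\tau$, $\omega_\tau=(\tau\to\tau)\to\tau\to\tau$, and $\beta_1^{s}\to\gamma$ abbreviates $\beta_1\to\cdots\to\beta_1\to\gamma$ with $s$ copies of $\beta_1$. The Church numeral of $n$ is $\rho(n)=\lambda f x.f^{n}x$ (so $\rho(0)=\lambda fx.x$, $\rho(1)=\lambda fx.fx$, etc.); it can be assigned type $\omega_\tau$ for every $\tau$. Equality $=_{\beta\eta}$ is $\beta\eta$-conversion. Extended polynomials: the smallest class of functions over $\mathbb{N}$ containing the constants $0$ and $1$, projections, addition, multiplication and $\mathrm{ifzero}(n,m,p)=(\text{if } n=0 \text{ then } m \text{ else } p)$, closed under composition. $\mathcal{G}$ is the smallest class of functions over $\mathbb{N}$ that is closed under composition and contains: all extended polynomials; for every $l\geq 2$ the function $f_1^{l}(m,n_1,\dots,n_l)=n_i$ where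 $i=(m\bmod l)+1$; and for every $l\geq 1$ the function $f_2^{l}(m,n_1,n_2)=(\text{if } m\leq l \text{ then } n_1 \text{ else } n_2)$. *)

From Stdlib Require Import Arith List Relations.
Import ListNotations.

Inductive term : Type :=
| Var : nat -> term
| App : term -> term -> term
| Lam : term -> term.

Fixpoint lift (c d : nat) (t : term) : term :=
  match t with
  | Var k => if k <? c then Var k else Var (k + d)
  | App a b => App (lift c d a) (lift c d b)
  | Lam a => Lam (lift (S c) d a)
  end.

Fixpoint subst (t : term) (n : nat) (u : term) : term :=
  match t with
  | Var k => if k <? n then Var k
             else if k =? n then lift 0 n u
             else Var (k - 1)
  | App a b => App (subst a n u) (subst b n u)
  | Lam a => Lam (subst a (S n) u)
  end.

Inductive step : term -> term -> Prop :=
| step_beta a b : step (App (Lam a) b) (subst a 0 b)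
| step_eta t : step (Lam (App (lift 0 1 t) (Var 0))) t
| step_appl a a' b : step a a' -> step (App a b) (App a' b)
| step_appr a b b' : step b b' -> step (App a b) (App a b')
| step_lam a a' : step a a' -> step (Lam a) (Lam a').

Definition beta_eta_conv : term -> term -> Prop := clos_refl_sym_trans term step.

Definition apps (E : term) (args : list term) : term := fold_left App args E.

Definition rho (n : nat) : term := Lam (Lam (Nat.iter n (App (Var 1)) (Var 0))).

Inductive ty : Type :=
| TO : ty
| Arr : ty -> ty -> ty.

Fixpoint arrows (bs : list ty) (g : ty) : ty :=
  match bs with
  | [] => g
  | b :: bs' => Arr b (arrows bs' g)
  end.

Definition omega (t : ty) : ty := Arr (Arr t t) (Arr t t).

Definition alpha : ty := omega TO.
Definition tau (s : nat) : ty := Arr (arrows (repeat alpha s) alpha) alpha.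

Inductive has_type : list ty -> term -> ty -> Prop :=
| ht_var G n A : nth_error G n = Some A -> has_type G (Var n) A
| ht_app G a b A B : has_type G a (Arr A B) -> has_type G b A -> has_type G (App a b) B
| ht_lam G a A B : has_type (A :: G) a B -> has_type G (Lam a) (Arr A B).

(** * The class G of functions N^k -> N.
    A k-ary function is represented as [list nat -> nat]; only its values
    on lists of length k matter (closure under extensional equality on N^k). *)
Inductive inG : nat -> (list nat -> nat) -> Prop :=
| G_zero k : inG k (fun _ => 0)
| G_one k : inG k (fun _ => 1)
| G_proj k i : i < k -> inG k (fun xs => nth i xs 0)
| G_add : inG 2 (fun xs => nth 0 xs 0 + nth 1 xs 0)
| G_mul : inG 2 (fun xs => nth 0 xs 0 * nth 1 xs 0)
| G_ifzero : inG 3 (fun xs => if nth 0 xs 0 =? 0 then nth 1 xs 0 else nth 2 xs 0)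
| G_f1 l : 2 <= l -> inG (S l) (fun xs => nth (S (nth 0 xs 0 mod l)) xs 0)
| G_f2 l : 1 <= l -> inG 3 (fun xs => if nth 0 xs 0 <=? l then nth 1 xs 0 else nth 2 xs 0)
| G_comp k m h gs : inG m h -> length gs = m -> (forall g, In g gs -> inG k g) ->
    inG k (fun xs => h (map (fun g => g xs) gs))
| G_ext k f g : inG k f -> (forall xs, length xs = k -> f xs = g xs) -> inG k g.

From Stdlib Require Import Arith List Relations Lia.
Import ListNotations.

(* Numerals of type ω_τ(s) are Church numerals used at type τ(s), so the usual
   λ-definitions of addition, multiplication and ifzero, valid at every ω_σ,
   give the extended polynomials, and composition is substitution.  The type
   τ(s) adds one thing: a map p on {0, ..., s-1} acts on s-tuples of numerals by
   (r_i)_i ↦ (r_(p i))_i through a term of type τ(s) -> τ(s).  Hence a numeral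
   m : ω_τ(s), iterating this action on a tuple of bits w and then selecting
   entry j, computes the bit w(p^m(j)) as a numeral of type α, which η-expands
   back to type ω_τ(s).  With p the successor modulo l this decides
   m mod l = c, whence f_1^l as a sum of products; with p the successor
   truncated at s-1 it decides m <= l once l + 1 < s, whence f_2^l. *)

Notation conv := beta_eta_conv.
Arguments rho : simpl never.

Lemma rho_unfold n : rho n = Lam (Lam (Nat.iter n (App (Var 1)) (Var 0))).
Proof. reflexivity. Qed.

Lemma conv_refl t : conv t t. Proof. apply rst_refl. Qed.
Lemma conv_sym a b : conv a b -> conv b a. Proof. apply rst_sym. Qed.
Lemma conv_trans a b c : conv a b -> conv b c -> conv a c. Proof. apply rst_trans. Qed.
Lemma conv_step a b : step a b -> conv a b. Proof. apply rst_step. Qed.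

Lemma conv_compat (F : term -> term) :
  (forall a b, step a b -> step (F a) (F b)) -> forall a b, conv a b -> conv (F a) (F b).
Proof.
  intros HF a b H; induction H.
  - now apply conv_step, HF.
  - apply conv_refl.
  - now apply conv_sym.
  - eapply conv_trans; eassumption.
Qed.

Lemma conv_appl a a' b : conv a a' -> conv (App a b) (App a' b).
Proof. apply (conv_compat (fun t => App t b)); auto using step. Qed.

Lemma conv_appr a b b' : conv b b' -> conv (App a b) (App a b').
Proof. apply (conv_compat (App a)); auto using step. Qed.

Lemma conv_lam a a' : conv a a' -> conv (Lam a) (Lam a').
Proof. apply (conv_compat Lam); auto using step. Qed.

Lemma conv_apps_head a a' l : conv a a' -> conv (apps a l) (apps a' l).
Proof. revert a a'; induction l; intros; simpl; auto using conv_appl. Qed.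

Lemma conv_apps_args a l l' : Forall2 conv l l' -> conv (apps a l) (apps a l').
Proof.
  intros H; revert a; induction H; intros; simpl; [apply conv_refl|].
  eapply conv_trans; [apply conv_apps_head, conv_appr, H | apply IHForall2].
Qed.

Fixpoint lams (n : nat) (t : term) : term :=
  match n with 0 => t | S n' => Lam (lams n' t) end.

Fixpoint closed_at (d : nat) (t : term) : Prop :=
  match t with
  | Var i => i < d
  | App a b => closed_at d a /\ closed_at d b
  | Lam a => closed_at (S d) a
  end.

(* Simultaneous substitution of closed terms: index [d + i] becomes
   [nth (length cs - 1 - i) cs], so the LAST term of [cs] replaces [d], as
   when [lams (length cs) t] is applied to [cs]. *)
Fixpoint msubst (t : term) (d : nat) (cs : list term) : term :=
  match t with
  | Var i => if i <? d then Var i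
             else if i <? d + length cs then nth (d + length cs - 1 - i) cs (Var 0)
             else Var (i - length cs)
  | App a b => App (msubst a d cs) (msubst b d cs)
  | Lam a => Lam (msubst a (S d) cs)
  end.

Lemma lift_0 c t : lift c 0 t = t.
Proof.
  revert c; induction t; intros; simpl; f_equal; auto.
  destruct (n <? c); f_equal; lia.
Qed.

Lemma subst_lift c t u : subst (lift c 1 t) c u = t.
Proof.
  revert c; induction t; intros; simpl; f_equal; auto.
  destruct (Nat.ltb_spec n c); simpl.
  - now rewrite (proj2 (Nat.ltb_lt n c)).
  - destruct (Nat.ltb_spec (n + 1) c), (Nat.eqb_spec (n + 1) c); try lia.
    f_equal; lia.
Qed.

Lemma lift_lift c a b t : lift c a (lift c b t) = lift c (a + b) t.
Proof.
  revert c; induction t; intros; simpl; f_equal; auto.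
  destruct (Nat.ltb_spec n c); simpl.
  - now rewrite (proj2 (Nat.ltb_lt n c)).
  - destruct (Nat.ltb_spec (n + b) c); [lia|]. f_equal; lia.
Qed.

Lemma eta_expand3 t :
  conv (Lam (Lam (Lam (App (App (App (lift 0 3 t) (Var 2)) (Var 1)) (Var 0))))) t.
Proof.
  eapply conv_trans; [do 2 apply conv_lam|].
  { rewrite <- (lift_lift 0 1 2).
    apply conv_step, (step_eta (App (App (lift 0 2 t) (Var 1)) (Var 0))). }
  eapply conv_trans; [apply conv_lam|].
  { rewrite <- (lift_lift 0 1 1); apply conv_step, (step_eta (App (lift 0 1 t) (Var 0))). }
  apply conv_step, step_eta.
Qed.

Lemma closed_lift d c k t : closed_at d t -> d <= c -> lift c k t = t.
Proof.
  revert d c; induction t; simpl; intros d c H Hd.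
  - destruct (Nat.ltb_spec n c); auto; lia.
  - destruct H; f_equal; eauto.
  - f_equal; apply (IHt (S d)); auto; lia.
Qed.

Lemma closed_subst d n t u : closed_at d t -> d <= n -> subst t n u = t.
Proof.
  revert d n; induction t; simpl; intros d m H Hd.
  - destruct (Nat.ltb_spec n m); auto; lia.
  - destruct H; f_equal; eauto.
  - f_equal; apply (IHt (S d)); auto; lia.
Qed.

Lemma closed_msubst d d' t cs : closed_at d t -> d <= d' -> msubst t d' cs = t.
Proof.
  revert d d'; induction t; simpl; intros d d' H Hd.
  - destruct (Nat.ltb_spec n d'); auto; lia.
  - destruct H; f_equal; eauto.
  - f_equal; apply (IHt (S d)); auto; lia.
Qed.

Lemma msubst_nil t d : msubst t d [] = t.
Proof.
  revert d; induction t; intros; simpl; f_equal; auto.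
  destruct (Nat.ltb_spec n d), (Nat.ltb_spec n (d + 0)); f_equal; lia.
Qed.

Lemma msubst_subst t d c cs : closed_at 0 c ->
  msubst (subst t (d + length cs) c) d cs = msubst t d (c :: cs).
Proof.
  revert d; induction t; intros d Hc; simpl; [| f_equal; auto | f_equal; apply (IHt (S d) Hc)].
  destruct (Nat.ltb_spec n (d + length cs)); simpl.
  - destruct (Nat.ltb_spec n d), (Nat.ltb_spec n (d + length cs)),
      (Nat.ltb_spec n (d + S (length cs))); try lia; auto.
    now replace (d + S (length cs) - 1 - n) with (S (d + length cs - 1 - n)) by lia.
  - destruct (Nat.eqb_spec n (d + length cs)).
    + rewrite (closed_lift 0), (closed_msubst 0) by (auto; lia).
      destruct (Nat.ltb_spec n d), (Nat.ltb_spec n (d + S (length cs))); try lia.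
      now replace (d + S (length cs) - 1 - n) with 0 by lia.
    + simpl. destruct (Nat.ltb_spec (n - 1) d), (Nat.ltb_spec n d),
        (Nat.ltb_spec (n - 1) (d + length cs)), (Nat.ltb_spec n (d + S (length cs))); try lia.
      f_equal; lia.
Qed.

Lemma msubst_var_rev n cs i : length cs = n -> i < n ->
  msubst (Var (n - 1 - i)) 0 cs = nth i cs (Var 0).
Proof.
  intros <- Hi; simpl.
  destruct (Nat.ltb_spec (length cs - 1 - i) (length cs)); [|lia].
  f_equal; lia.
Qed.

Lemma subst_lams n t k u : subst (lams n t) k u = lams n (subst t (n + k) u).
Proof.
  revert k; induction n; intros; simpl; auto.
  now rewrite IHn, Nat.add_succ_r.
Qed.

Lemma multi_beta n body cs : Forall (closed_at 0) cs -> length cs = n ->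
  conv (apps (lams n body) cs) (msubst body 0 cs).
Proof.
  intros H <-; revert body; induction H as [|c cs Hc Hcs IH]; intros; simpl.
  - rewrite msubst_nil; apply conv_refl.
  - eapply conv_trans; [apply conv_apps_head, conv_step, step_beta|].
    rewrite subst_lams, Nat.add_0_r, <- (msubst_subst _ 0 c cs Hc).
    apply IH.
Qed.

Lemma beta_closed b c : closed_at 0 c -> conv (App (Lam b) c) (msubst b 0 [c]).
Proof. intros; apply (multi_beta 1 b [c]); auto. Qed.

Lemma subst_apps h l n u : subst (apps h l) n u = apps (subst h n u) (map (fun t => subst t n u) l).
Proof. revert h; induction l; intros; simpl; auto. Qed.

Lemma msubst_apps h l d cs :
  msubst (apps h l) d cs = apps (msubst h d cs) (map (fun t => msubst t d cs) l).
Proof. revert h; induction l; intros; simpl; auto. Qed.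

Lemma subst_iter n F X k u :
  subst (Nat.iter n (App F) X) k u = Nat.iter n (App (subst F k u)) (subst X k u).
Proof. induction n; simpl; now f_equal. Qed.

Lemma rho_app n F X : conv (App (App (rho n) F) X) (Nat.iter n (App F) X).
Proof.
  eapply conv_trans; [apply conv_appl, conv_step, step_beta|].
  simpl; rewrite subst_iter; simpl.
  eapply conv_trans; [apply conv_step, step_beta|].
  rewrite subst_iter, subst_lift; simpl; rewrite lift_0; apply conv_refl.
Qed.

Lemma iter_rho_app a b F X :
  conv (Nat.iter a (App (App (rho b) F)) X) (Nat.iter (a * b) (App F) X).
Proof.
  induction a; simpl; [apply conv_refl|].
  eapply conv_trans; [apply conv_appr, IHa|].
  eapply conv_trans; [apply rho_app|].
  rewrite Nat.iter_add; apply conv_refl.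
Qed.

Lemma weaken G D t A : has_type G t A -> has_type (G ++ D) t A.
Proof.
  induction 1; econstructor; eauto.
  rewrite nth_error_app1; auto. apply nth_error_Some; congruence.
Qed.

Lemma weaken_closed G t A : has_type [] t A -> has_type G t A.
Proof. apply (weaken [] G). Qed.

Lemma typed_closed G t A : has_type G t A -> closed_at (length G) t.
Proof. induction 1; simpl; auto. apply nth_error_Some; congruence. Qed.

Lemma lams_typed G n A t B :
  has_type (repeat A n ++ G) t B -> has_type G (lams n t) (arrows (repeat A n) B).
Proof.
  revert G; induction n; intros G H; simpl; auto.
  constructor; apply IHn.
  change (A :: G) with ([A] ++ G); now rewrite app_assoc, <- repeat_cons.
Qed.

Lemma apps_typed G h args As B :
  has_type G h (arrows As B) -> Forall2 (has_type G) args As -> has_type G (apps h args) B.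
Proof. intros Hh Hargs; revert h Hh; induction Hargs; intros; simpl; eauto using has_type. Qed.

Lemma var_repeat_typed G A k i : i < k -> has_type (repeat A k ++ G) (Var i) A.
Proof.
  intros; constructor.
  rewrite nth_error_app1 by (rewrite repeat_length; lia).
  apply nth_error_repeat; lia.
Qed.

Lemma rho_typed G n A : has_type G (rho n) (omega A).
Proof.
  do 2 constructor.
  induction n; simpl; repeat econstructor; eauto.
Qed.

Lemma rho_closed n : closed_at 0 (rho n).
Proof. apply (typed_closed [] _ _ (rho_typed [] n TO)). Qed.

Lemma map_rho_closed ns : Forall (closed_at 0) (map rho ns).
Proof. apply Forall_map, Forall_forall; intros; apply rho_closed. Qed.

Definition represents (s k : nat) (f : list nat -> nat) (E : term) : Prop :=
  (forall ns, length ns = k -> conv (apps E (map rho ns)) (rho (f ns))) /\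
  has_type [] E (arrows (repeat (omega (tau s)) k) (omega (tau s))).

Definition representable (s k : nat) (f : list nat -> nat) : Prop := exists E, represents s k f E.

Lemma rep_ext s k f g :
  representable s k f -> (forall xs, length xs = k -> f xs = g xs) -> representable s k g.
Proof. intros [E [Hconv Hty]] Hfg; exists E; split; auto. intros; rewrite <- Hfg; auto. Qed.

Lemma rep_const s k c : representable s k (fun _ => c).
Proof.
  exists (lams k (rho c)); split.
  - intros ns Hns.
    eapply conv_trans; [apply multi_beta; [apply map_rho_closed | now rewrite length_map]|].
    rewrite (closed_msubst 0) by (apply rho_closed || lia); apply conv_refl.
  - apply lams_typed, rho_typed.
Qed.

Definition proj_term (k i : nat) : term := lams k (Var (k - 1 - i)).

Lemma proj_term_conv k cs i : Forall (closed_at 0) cs -> length cs = k -> i < k ->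
  conv (apps (proj_term k i) cs) (nth i cs (Var 0)).
Proof.
  intros Hcs Hk Hi; eapply conv_trans; [apply multi_beta; auto|].
  rewrite (msubst_var_rev k) by auto; apply conv_refl.
Qed.

Lemma proj_term_typed G k i A : i < k -> has_type G (proj_term k i) (arrows (repeat A k) A).
Proof. intros; apply lams_typed, var_repeat_typed; lia. Qed.

Lemma rep_proj s k i : i < k -> representable s k (fun xs => nth i xs 0).
Proof.
  intros Hi; exists (proj_term k i); split.
  - intros ns Hns.
    eapply conv_trans;
      [apply proj_term_conv; [apply map_rho_closed | now rewrite length_map | auto]|].
    rewrite nth_indep with (d' := rho 0) by (rewrite length_map; lia).
    rewrite map_nth; apply conv_refl.
  - now apply proj_term_typed.
Qed.

Definition vars (k : nat) : list term := map (fun i => Var (k - 1 - i)) (seq 0 k).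

Lemma length_vars k : length (vars k) = k.
Proof. unfold vars; now rewrite length_map, length_seq. Qed.

Lemma msubst_vars cs : map (fun t => msubst t 0 cs) (vars (length cs)) = cs.
Proof.
  apply nth_ext with (Var 0) (Var 0); rewrite length_map, length_vars; auto.
  intros i Hi; unfold vars; rewrite map_map.
  rewrite nth_indep with (d' := msubst (Var (length cs - 1 - 0)) 0 cs)
    by now rewrite length_map, length_seq.
  rewrite (map_nth (fun i => msubst (Var (length cs - 1 - i)) 0 cs)), seq_nth by lia.
  now apply msubst_var_rev.
Qed.

Lemma Forall2_repeat_r {X Y} (P : X -> Y -> Prop) l y n :
  length l = n -> Forall (fun x => P x y) l -> Forall2 P l (repeat y n).
Proof. intros <-; induction 1; constructor; auto. Qed.

Lemma vars_typed G A k : Forall2 (has_type (repeat A k ++ G)) (vars k) (repeat A k).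
Proof.
  apply Forall2_repeat_r; [apply length_vars|].
  unfold vars; apply Forall_map, Forall_forall; intros i Hi.
  apply in_seq in Hi; apply var_repeat_typed; lia.
Qed.

Lemma Forall_exists_Forall2 {X Y} (P : X -> Y -> Prop) l :
  Forall (fun x => exists y, P x y) l -> exists l', Forall2 P l l'.
Proof. induction 1 as [|x l [y Hy] _ [l' Hl']]; [exists [] | exists (y :: l')]; auto. Qed.

Lemma rep_comp s k m h gs :
  representable s m h -> length gs = m -> Forall (representable s k) gs ->
  representable s k (fun xs => h (map (fun g => g xs) gs)).
Proof.
  intros [H [Hconv Hty]] Hlen Hgs.
  destruct (Forall_exists_Forall2 (represents s k) gs Hgs) as [Es HEs].
  exists (lams k (apps H (map (fun G => apps G (vars k)) Es))); split.
  - intros ns Hns.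
    assert (Hargs : Forall2 conv
      (map (fun t => msubst t 0 (map rho ns)) (map (fun G => apps G (vars k)) Es))
      (map rho (map (fun g => g ns) gs))).
    { clear Hlen Hgs.
      induction HEs as [|g G gs Es [HGconv HGty] _ IH]; simpl; constructor; auto.
      rewrite msubst_apps, (closed_msubst 0) by (apply (typed_closed _ _ _ HGty) || lia).
      rewrite <- Hns, <- (length_map rho), msubst_vars.
      now apply HGconv. }
    eapply conv_trans; [apply multi_beta; [apply map_rho_closed | now rewrite length_map]|].
    rewrite msubst_apps, (closed_msubst 0) by (apply (typed_closed _ _ _ Hty) || lia).
    eapply conv_trans; [apply conv_apps_args, Hargs|].
    apply Hconv; now rewrite !length_map.
  - apply lams_typed.
    apply apps_typed with (repeat (omega (tau s)) m); [now apply weaken_closed|].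
    rewrite <- Hlen, (Forall2_length HEs); clear -HEs.
    induction HEs as [|g G gs Es [_ HGty] _ IH]; simpl; constructor; auto.
    apply apps_typed with (repeat (omega (tau s)) k); [now apply weaken_closed | apply vars_typed].
Qed.

Lemma rep_comp1 s k g :
  representable s 1 g -> 0 < k -> representable s k (fun xs => g [nth 0 xs 0]).
Proof.
  intros Hg Hk; apply (rep_comp s k 1 g [fun xs => nth 0 xs 0]); auto.
  repeat constructor; now apply rep_proj.
Qed.

Ltac solve_typing :=
  repeat first [ apply ht_lam | eapply ht_app | (apply ht_var; reflexivity) ].

Lemma rep_add s : representable s 2 (fun xs => nth 0 xs 0 + nth 1 xs 0).
Proof.
  exists (lams 2 (Lam (Lam (App (App (Var 3) (Var 1)) (App (App (Var 2) (Var 1)) (Var 0)))))).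
  split; [|solve_typing].
  intros [|a [|b [|]]] Hns; try discriminate.
  eapply conv_trans; [apply multi_beta; [apply map_rho_closed | reflexivity]|]; simpl.
  rewrite (rho_unfold (a + b)), Nat.iter_add; do 2 apply conv_lam.
  eapply conv_trans; [apply conv_appr, rho_app | apply rho_app].
Qed.

Lemma rep_mul s : representable s 2 (fun xs => nth 0 xs 0 * nth 1 xs 0).
Proof.
  exists (lams 2 (Lam (Lam (App (App (Var 3) (App (Var 2) (Var 1))) (Var 0))))).
  split; [|solve_typing].
  intros [|a [|b [|]]] Hns; try discriminate.
  eapply conv_trans; [apply multi_beta; [apply map_rho_closed | reflexivity]|]; simpl.
  rewrite (rho_unfold (a * b)); do 2 apply conv_lam.
  eapply conv_trans; [apply rho_app | apply iter_rho_app].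
Qed.

Lemma rep_ifzero s :
  representable s 3 (fun xs => if nth 0 xs 0 =? 0 then nth 1 xs 0 else nth 2 xs 0).
Proof.
  (* [λ n m p f x. n (λ _. p f x) (m f x)] *)
  exists (lams 3 (Lam (Lam (App (App (Var 4) (Lam (App (App (Var 3) (Var 2)) (Var 1))))
                               (App (App (Var 3) (Var 1)) (Var 0)))))).
  split; [|solve_typing].
  intros [|a [|b [|c [|]]]] Hns; try discriminate.
  eapply conv_trans; [apply multi_beta; [apply map_rho_closed | reflexivity]|]; simpl.
  rewrite (rho_unfold (if a =? 0 then b else c)); do 2 apply conv_lam.
  eapply conv_trans; [apply rho_app|].
  destruct a; simpl; [apply rho_app|].
  eapply conv_trans; [apply conv_step, step_beta|]; cbn -[rho].
  rewrite (closed_subst 0) by (apply rho_closed || lia).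
  apply rho_app.
Qed.

Lemma rep_plus s k g1 g2 : representable s k g1 -> representable s k g2 ->
  representable s k (fun xs => g1 xs + g2 xs).
Proof. intros; apply (rep_comp s k 2 _ [g1; g2] (rep_add s)); repeat constructor; auto. Qed.

Lemma rep_times s k g1 g2 : representable s k g1 -> representable s k g2 ->
  representable s k (fun xs => g1 xs * g2 xs).
Proof. intros; apply (rep_comp s k 2 _ [g1; g2] (rep_mul s)); repeat constructor; auto. Qed.

Lemma rep_if_zero s k g1 g2 g3 :
  representable s k g1 -> representable s k g2 -> representable s k g3 ->
  representable s k (fun xs => if g1 xs =? 0 then g2 xs else g3 xs).
Proof. intros; apply (rep_comp s k 3 _ [g1; g2; g3] (rep_ifzero s)); repeat constructor; auto. Qed.

Definition numerals (s : nat) (w : nat -> nat) : list term := map (fun i => rho (w i)) (seq 0 s).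

Lemma length_numerals s w : length (numerals s w) = s.
Proof. unfold numerals; now rewrite length_map, length_seq. Qed.

Lemma nth_numerals s w i d : i < s -> nth i (numerals s w) d = rho (w i).
Proof.
  intros Hi; unfold numerals.
  rewrite nth_indep with (d' := rho (w 0)) by (rewrite length_map, length_seq; lia).
  now rewrite (map_nth (fun i => rho (w i))), seq_nth.
Qed.

Lemma numerals_closed s w : Forall (closed_at 0) (numerals s w).
Proof. unfold numerals; apply Forall_map, Forall_forall; intros; apply rho_closed. Qed.

Lemma numerals_typed G s w : Forall2 (has_type G) (numerals s w) (repeat alpha s).
Proof.
  apply Forall2_repeat_r; [apply length_numerals|].
  unfold numerals; apply Forall_map, Forall_forall; intros; apply rho_typed.
Qed.

Definition num_tuple (s : nat) (w : nat -> nat) : term := Lam (apps (Var 0) (numerals s w)).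

(* [λ x_0 ... x_(s-1). h x_(p 0) ... x_(p (s-1))], with [h] free *)
Definition permute_args (s : nat) (p : nat -> nat) : term :=
  lams s (apps (Var s) (map (fun i => Var (s - 1 - p i)) (seq 0 s))).

Definition tuple_map (s : nat) (p : nat -> nat) : term :=
  Lam (Lam (App (Var 1) (permute_args s p))).

Lemma num_tuple_ext s w w' : (forall i, w i = w' i) -> num_tuple s w = num_tuple s w'.
Proof.
  intros Hw; unfold num_tuple, numerals.
  now rewrite (map_ext _ _ (fun i => f_equal rho (Hw i))).
Qed.

Lemma num_tuple_typed G s w : has_type G (num_tuple s w) (tau s).
Proof.
  constructor; apply apps_typed with (repeat alpha s).
  - now constructor.
  - apply numerals_typed.
Qed.

Lemma permute_args_typed G s p :
  has_type (arrows (repeat alpha s) alpha :: G) (permute_args s p) (arrows (repeat alpha s) alpha).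
Proof.
  apply lams_typed, apps_typed with (repeat alpha s).
  - constructor.
    now rewrite nth_error_app2, repeat_length, Nat.sub_diag by (rewrite repeat_length; lia).
  - apply Forall2_repeat_r; [now rewrite length_map, length_seq|].
    apply Forall_map, Forall_forall; intros i Hi.
    apply in_seq in Hi; apply var_repeat_typed; lia.
Qed.

Lemma tuple_map_typed G s p : has_type G (tuple_map s p) (Arr (tau s) (tau s)).
Proof.
  do 2 constructor; apply ht_app with (arrows (repeat alpha s) alpha).
  - now constructor.
  - apply (weaken [_] _), permute_args_typed.
Qed.

Lemma permute_args_conv s p w : (forall i, i < s -> p i < s) ->
  conv (apps (permute_args s p) (numerals s w)) (apps (Var 0) (numerals s (fun i => w (p i)))).
Proof.
  intros Hp.
  eapply conv_trans; [apply multi_beta; [apply numerals_closed | apply length_numerals]|].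
  rewrite msubst_apps, map_map.
  replace (msubst (Var s) 0 (numerals s w)) with (Var 0).
  2:{ cbn [msubst]; rewrite length_numerals.
      destruct (Nat.ltb_spec s 0), (Nat.ltb_spec s (0 + s)); try lia; f_equal; lia. }
  replace (map _ (seq 0 s)) with (numerals s (fun i => w (p i))); [apply conv_refl|].
  apply map_ext_in; intros i Hi; apply in_seq in Hi.
  rewrite (msubst_var_rev s) by (apply length_numerals || apply Hp; lia).
  symmetry; apply nth_numerals, Hp; lia.
Qed.

Lemma tuple_map_conv s p w : (forall i, i < s -> p i < s) ->
  conv (App (tuple_map s p) (num_tuple s w)) (num_tuple s (fun i => w (p i))).
Proof.
  intros Hp.
  eapply conv_trans; [apply beta_closed, (typed_closed [] _ _ (num_tuple_typed [] s w))|].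
  cbn -[permute_args num_tuple].
  rewrite (closed_msubst 1) by first [exact (typed_closed _ _ _ (permute_args_typed [] s p)) | lia].
  apply conv_lam; unfold num_tuple at 1.
  eapply conv_trans; [apply conv_step, step_beta|].
  rewrite subst_apps; cbn -[permute_args numerals]; rewrite lift_0.
  rewrite map_ext_in with (g := fun t => t), map_id.
  - now apply permute_args_conv.
  - intros t Ht; apply (closed_subst 0); [|lia].
    exact (proj1 (Forall_forall _ _) (numerals_closed s w) t Ht).
Qed.

Lemma iter_tuple_map_conv s p w m : (forall i, i < s -> p i < s) ->
  conv (Nat.iter m (App (tuple_map s p)) (num_tuple s w))
       (num_tuple s (fun i => w (Nat.iter m p i))).
Proof.
  intros Hp; induction m; simpl; [apply conv_refl|].
  eapply conv_trans; [apply conv_appr, IHm|].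
  eapply conv_trans; [apply tuple_map_conv, Hp|].
  rewrite (num_tuple_ext s _ (fun i => w (Nat.iter (S m) p i)))
    by (intros; now rewrite Nat.iter_succ_r).
  apply conv_refl.
Qed.

Lemma select_conv s w j : j < s -> conv (App (num_tuple s w) (proj_term s j)) (rho (w j)).
Proof.
  intros Hj.
  eapply conv_trans; [apply beta_closed, (typed_closed [] _ _ (proj_term_typed [] s j alpha Hj))|].
  rewrite msubst_apps; cbn -[proj_term numerals].
  rewrite map_ext_in with (g := fun t => t), map_id.
  - rewrite <- (nth_numerals s w j (Var 0) Hj).
    apply proj_term_conv; [apply numerals_closed | apply length_numerals | exact Hj].
  - intros t Ht; apply (closed_msubst 0); [|lia].
    exact (proj1 (Forall_forall _ _) (numerals_closed s w) t Ht).
Qed.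

Lemma read_conv s p w j m : (forall i, i < s -> p i < s) -> j < s ->
  conv (App (App (App (rho m) (tuple_map s p)) (num_tuple s w)) (proj_term s j))
       (rho (w (Nat.iter m p j))).
Proof.
  intros Hp Hj.
  eapply conv_trans; [apply conv_appl, rho_app|].
  eapply conv_trans; [apply conv_appl, iter_tuple_map_conv, Hp|].
  now apply (select_conv s (fun i => w (Nat.iter m p i))).
Qed.

(* [λ b f x h g y. b (λ _. f x h g y) (x h g y)] sends the numerals 0 and 1 of
   type α to their η-expansions at type ω_(X -> α) *)
Definition bit_to_numeral : term :=
  Lam (Lam (Lam (Lam (Lam (Lam
    (App (App (Var 5) (Lam (App (App (App (App (Var 5) (Var 4)) (Var 3)) (Var 2)) (Var 1))))
         (App (App (App (Var 3) (Var 2)) (Var 1)) (Var 0)))))))).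

Lemma bit_to_numeral_typed G X : has_type G bit_to_numeral (Arr alpha (omega (Arr X alpha))).
Proof. solve_typing. Qed.

Lemma bit_to_numeral_conv b : b <= 1 -> conv (App bit_to_numeral (rho b)) (rho b).
Proof.
  intros Hb; eapply conv_trans; [apply beta_closed, rho_closed|]; cbn -[rho].
  eapply conv_trans; [do 5 apply conv_lam; apply rho_app|].
  destruct b as [|[|]]; [| |lia]; cbn; rewrite rho_unfold; do 2 apply conv_lam.
  - apply (eta_expand3 (Var 0)).
  - eapply conv_trans; [do 3 apply conv_lam; apply conv_step, step_beta|].
    apply (eta_expand3 (App (Var 1) (Var 0))).
Qed.

Definition read_term (s : nat) (p w : nat -> nat) (j : nat) : term :=
  Lam (App bit_to_numeral
         (App (App (App (Var 0) (tuple_map s p)) (num_tuple s w)) (proj_term s j))).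

Lemma rep_orbit_bit s p w j : (forall i, i < s -> p i < s) -> j < s -> (forall i, w i <= 1) ->
  representable s 1 (fun ys => w (Nat.iter (nth 0 ys 0) p j)).
Proof.
  intros Hp Hj Hw; exists (read_term s p w j); split.
  - intros [|m []] Hns; try discriminate.
    eapply conv_trans; [apply beta_closed, rho_closed|].
    cbn -[bit_to_numeral tuple_map num_tuple proj_term rho Nat.iter].
    rewrite !(closed_msubst 0 0) by first
      [ exact (typed_closed _ _ _ (bit_to_numeral_typed [] alpha))
      | exact (typed_closed _ _ _ (tuple_map_typed [] s p))
      | exact (typed_closed _ _ _ (num_tuple_typed [] s w))
      | exact (typed_closed _ _ _ (proj_term_typed [] s j alpha Hj))
      | lia ].
    eapply conv_trans; [apply conv_appr, read_conv; assumption|].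
    apply bit_to_numeral_conv, Hw.
  - constructor; apply ht_app with alpha; [apply bit_to_numeral_typed|].
    apply ht_app with (arrows (repeat alpha s) alpha); [|now apply proj_term_typed].
    apply ht_app with (tau s); [|apply num_tuple_typed].
    apply ht_app with (Arr (tau s) (tau s)); [now constructor | apply tuple_map_typed].
Qed.

Lemma iter_succ_mod l m : Nat.iter m (fun i => S i mod l) 0 = m mod l.
Proof.
  induction m; simpl; [now rewrite Nat.Div0.mod_0_l|].
  rewrite IHm, <- Nat.add_1_r, Nat.Div0.add_mod_idemp_l; f_equal; lia.
Qed.

Lemma iter_succ_min n m : Nat.iter m (fun i => Nat.min (S i) n) 0 = Nat.min m n.
Proof. induction m as [|m IH]; [simpl; lia|]. rewrite Nat.iter_succ, IH; lia. Qed.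

Lemma rep_mod_eq_indicator s l c : 0 < l <= s ->
  representable s 1 (fun ys => if nth 0 ys 0 mod l =? c then 1 else 0).
Proof.
  intros Hl; eapply rep_ext.
  - apply (rep_orbit_bit s (fun i => S i mod l) (fun i => if i =? c then 1 else 0) 0); [| lia |].
    + intros i _; pose proof (Nat.mod_upper_bound (S i) l); lia.
    + intros i; destruct (i =? c); lia.
  - intros ys _; cbv beta; now rewrite iter_succ_mod.
Qed.

Lemma rep_gt_indicator s l : l + 1 < s ->
  representable s 1 (fun ys => if nth 0 ys 0 <=? l then 0 else 1).
Proof.
  intros Hl; eapply rep_ext.
  - apply (rep_orbit_bit s (fun i => Nat.min (S i) (s - 1)) (fun i => if i <=? l then 0 else 1) 0);
      [intros; lia | lia |].
    intros i; destruct (i <=? l); lia.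
  - intros ys _; cbv beta; rewrite iter_succ_min.
    destruct (Nat.leb_spec (Nat.min (nth 0 ys 0) (s - 1)) l), (Nat.leb_spec (nth 0 ys 0) l); lia.
Qed.

(* [f_1^l] is the sum over [c < l] of [(m mod l = c) * n_(c+1)]. *)
Lemma rep_f1_partial s l c : 0 < l < s -> c <= l ->
  representable s (S l)
    (fun xs => if nth 0 xs 0 mod l <? c then nth (S (nth 0 xs 0 mod l)) xs 0 else 0).
Proof.
  intros Hl; induction c as [|c IH]; intros Hc.
  - apply (rep_const s (S l) 0).
  - apply rep_ext with (fun xs =>
      (if nth 0 xs 0 mod l <? c then nth (S (nth 0 xs 0 mod l)) xs 0 else 0)
      + (if nth 0 xs 0 mod l =? c then 1 else 0) * nth (S c) xs 0).
    + apply rep_plus; [apply IH; lia|].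
      apply rep_times; [|apply rep_proj; lia].
      apply (rep_comp1 s (S l) (fun ys => if nth 0 ys 0 mod l =? c then 1 else 0));
        [apply rep_mod_eq_indicator|]; lia.
    + intros xs _.
      destruct (Nat.ltb_spec (nth 0 xs 0 mod l) c), (Nat.eqb_spec (nth 0 xs 0 mod l) c),
        (Nat.ltb_spec (nth 0 xs 0 mod l) (S c)); try lia.
      rewrite e; lia.
Qed.

Lemma rep_f1 s l : 2 <= l -> l < s ->
  representable s (S l) (fun xs => nth (S (nth 0 xs 0 mod l)) xs 0).
Proof.
  intros Hl Hs; eapply rep_ext; [apply (rep_f1_partial s l l); lia|].
  intros xs _; cbv beta.
  now rewrite (proj2 (Nat.ltb_lt _ _) (Nat.mod_upper_bound (nth 0 xs 0) l ltac:(lia))).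
Qed.

Lemma rep_f2 s l : l + 1 < s ->
  representable s 3 (fun xs => if nth 0 xs 0 <=? l then nth 1 xs 0 else nth 2 xs 0).
Proof.
  intros Hs.
  apply rep_ext with (fun xs => if (if nth 0 xs 0 <=? l then 0 else 1) =? 0
                                then nth 1 xs 0 else nth 2 xs 0).
  - apply rep_if_zero; [|apply rep_proj; lia..].
    apply (rep_comp1 s 3 (fun ys => if nth 0 ys 0 <=? l then 0 else 1));
      [apply rep_gt_indicator|]; lia.
  - intros xs _; now destruct (nth 0 xs 0 <=? l).
Qed.

Definition eventually (P : nat -> Prop) : Prop := exists N, forall s, N < s -> P s.

Lemma eventually_always (P : nat -> Prop) : (forall s, P s) -> eventually P.
Proof. now exists 0. Qed.

Lemma eventually_forall_in {X} (l : list X) (P : X -> nat -> Prop) :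
  (forall x, In x l -> eventually (P x)) -> eventually (fun s => forall x, In x l -> P x s).
Proof.
  induction l as [|x l IH]; intros Hl; [now exists 0|].
  destruct (Hl x (or_introl eq_refl)) as [N1 H1], IH as [N2 H2]; [intros; apply Hl; now right|].
  exists (N1 + N2); intros s Hs y [<-|Hy]; [apply H1 | apply H2]; auto; lia.
Qed.

Lemma inG_representable k f : inG k f -> eventually (fun s => representable s k f).
Proof.
  induction 1 as [| | | | | |l|l|k m h gs _ [N1 Hh] Hlen _ Hgs|k f g _ [N Hf] Hfg].
  - apply eventually_always; intros; apply rep_const.
  - apply eventually_always; intros; apply rep_const.
  - apply eventually_always; intros; now apply rep_proj.
  - apply eventually_always, rep_add.
  - apply eventually_always, rep_mul.
  - apply eventually_always, rep_ifzero.
  - exists l; intros; now apply rep_f1.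
  - exists (l + 1); intros; apply rep_f2; lia.
  - destruct (eventually_forall_in gs _ Hgs) as [N2 Hgs'].
    exists (N1 + N2); intros s Hs; apply rep_comp with m; auto; [apply Hh; lia|].
    apply Forall_forall; intros; apply Hgs'; auto; lia.
  - exists N; intros; eapply rep_ext; eauto.
Qed.

Theorem theorem1 :
  forall (k : nat) (f : list nat -> nat),
    inG k f ->
    exists N : nat, forall s : nat, 0 < s -> N < s ->
      exists E : term,
        (forall ns : list nat, length ns = k ->
           beta_eta_conv (apps E (map rho ns)) (rho (f ns))) /\
        has_type [] E (arrows (repeat (omega (tau s)) k) (omega (tau s))).
Proof.
  intros k f Hf.
  destruct (inG_representable k f Hf) as [N HN].
  exists N; intros s _ Hs.
  exact (HN s Hs).
Qed.
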